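(* Let $L\in\mathbb N$, let $\Lambda=\Lambda_L$, and let $W=S_1C_1S_2C_2$ be a walk of the form described below. Then there is a unitary operator (walk) $W_d$ on $\mathcal H$ such that $W_L=P_LW_dP_L^*$ is unitary on $P_L\mathcal H=\ell^2(\Lambda_L)\otimes\mathbb C^2$, and $W-W_d$ differs from zero only on the set $(\Delta\Lambda)_2=\{x\in\mathbb Z^2:\operatorname{dist}(x,\Delta\Lambda)\le 2\}$, i.e. $\langle x,s|(W-W_d)|y,s'\rangle=0$ unless $x,y\in(\Delta\Lambda)_2$.
   Context: $\mathcal H=\ell^2(\mathbb Z^2)\otimes\mathbb C^2$ with basis $|x,s\rangle$, $x\in\mathbb Z^2$, $s\in\{\pm1\}$. A walk of the considered form is $W=S_1C_1S_2C_2$, where each coin operator $C_j=\bigoplus_{x\in\mathbb Z^2}C_j(x)$ acts as $|x\rangle\otimes\psi\mapsto|x\rangle\otimes C_j(x)\psi$ with $C_j(x)$ a unitary $2\times2$ matrix, and the state-dependent shifts are $S_\alpha=\sum_{s=\pm1}t_\alpha^s\otimes P_s$, where $t_\alpha|x\rangle=|x+e_\alpha\rangle$ and $P_{\pm1}$ is the projection onto $|{\pm1}\rangle$. $\Lambda_L=\{x\in\mathbb Z^2:|x_1|\le L,|x_2|\le L\}$, $P_L:\mathcal H\to\ell^2(\Lambda_L)\otimes\mathbb C^2$ is the canonical projection, and $\Delta\Lambda$ is the boundary of the square $\{x:-L-1\le x_1\le L,\ -L-1\le x_2\le L\}$, i.e. the set of its points with $x_1\in\{-L-1,L\}$ or $x_2\in\{-L-1,L\}$.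 $\operatorname{dist}$ denotes the Euclidean distance in $\mathbb Z^2$. *)

From HB Require Import structures.
From mathcomp Require Import all_boot all_order all_algebra.
From mathcomp Require Import spectral.
From mathcomp Require Import complex.
From mathcomp Require Import reals.

Set Implicit Arguments.
Unset Strict Implicit.
Unset Printing Implicit Defensive.

Import Order.TTheory GRing.Theory Num.Theory.
Local Open Scope ring_scope.

(* A basis vector |x,s> of H = l^2(Z^2) (x) C^2 is indexed by a "site" (x,s);
   the spin s = +1 is encoded by [true], s = -1 by [false]. *)
Definition point := (int * int)%type.
Definition site := (point * bool)%type.

Definition spin (s : bool) : int := if s then 1 else -1.

Definition sidx (s : bool) : 'I_2 := if s then ord0 else ord_max.

(* Operators on H are described by their matrix elements
   K (x,s) (y,s') = <x,s| K |y,s'>. *)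
Definition kernel (C : Type) := site -> site -> C.

Definition box (x : point) (r : nat) : seq point :=
  [seq (x.1 + (i%:Z - r%:Z), x.2 + (j%:Z - r%:Z)) |
     i <- iota 0 (2 * r).+1, j <- iota 0 (2 * r).+1].

Definition sites_of (P : seq point) : seq site :=
  [seq (z, s) | z <- P, s <- [:: true; false]].

Definition nbhd (x : point) (r : nat) : seq site := sites_of (box x r).

Definition banded (C : nmodType) (r : nat) (K : kernel C) : Prop :=
  forall u v : site,
    (r < maxn `|u.1.1 - v.1.1|%N `|u.1.2 - v.1.2|%N)%N -> K u v = 0.

(* product of kernels, correct (finite sum) whenever A has range <= r *)
Definition kmul (C : pzSemiRingType) (r : nat) (A B : kernel C) : kernel C :=
  fun u v => \sum_(w <- nbhd u.1 r) A u w * B w v.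

Definition shift1 (C : pzSemiRingType) : kernel C := fun u v =>
  ((u.2 == v.2) && (u.1 == (v.1.1 + spin v.2, v.1.2)))%:R.
Definition shift2 (C : pzSemiRingType) : kernel C := fun u v =>
  ((u.2 == v.2) && (u.1 == (v.1.1, v.1.2 + spin v.2)))%:R.

Definition coin (C : pzSemiRingType) (c : point -> 'M[C]_2) : kernel C :=
  fun u v => (u.1 == v.1)%:R * c v.1 (sidx u.2) (sidx v.2).

Definition walk (C : pzSemiRingType) (c1 c2 : point -> 'M[C]_2) : kernel C :=
  kmul 1 (shift1 C) (kmul 0 (coin c1) (kmul 1 (shift2 C) (coin c2))).

(* A banded kernel of range r defines a (bounded) unitary operator on H:
   K^* K = 1 and K K^* = 1, the sums being finite. *)
Definition unitary_kernel (C : numClosedFieldType) (K : kernel C) : Prop :=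
  exists r : nat, banded r K /\
    forall u v : site,
      \sum_(w <- nbhd u.1 r) (K w u)^* * K w v = (u == v)%:R /\
      \sum_(w <- nbhd u.1 r) K u w * (K v w)^* = (u == v)%:R.

Definition LambdaL (L : nat) : seq point := box (0, 0) L.

Definition compression_unitary (C : numClosedFieldType) (L : nat) (K : kernel C) :
  Prop :=
  forall u v : site, u.1 \in LambdaL L -> v.1 \in LambdaL L ->
    \sum_(w <- sites_of (LambdaL L)) (K w u)^* * K w v = (u == v)%:R /\
    \sum_(w <- sites_of (LambdaL L)) K u w * (K v w)^* = (u == v)%:R.

Definition in_DeltaLambda (L : nat) (x : point) : Prop :=
  let a := - (L%:Z) - 1 in let b := L%:Z in
  [/\ a <= x.1 <= b, a <= x.2 <= b &
      [|| x.1 == a, x.1 == b, x.2 == a | x.2 == b]].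

Definition in_DeltaLambda2 (L : nat) (x : point) : Prop :=
  exists b : point, in_DeltaLambda L b /\
    (x.1 - b.1) ^+ 2 + (x.2 - b.2) ^+ 2 <= 4.

From HB Require Import structures.
From mathcomp Require Import all_boot all_order all_algebra.
From mathcomp Require Import spectral complex reals.
From mathcomp Require Import zify ring.

(* Replace each shift S_a by a decoupled shift D_a that moves a walker as S_a does, except
   that a move which would cross the boundary of Lambda is replaced by a spin flip in place.
   D_a is a permutation of the basis preserving both Lambda and its complement, so
   W_d = D_1 C_1 D_2 C_2 is a product of unitaries, is unitary, and its compression to
   Lambda is unitary too.  All operators are banded kernels, and a product of banded
   unitary kernels is again one, all sums being finite sums over boxes.  Finally W and
   W_d only differ on paths of W through a boundary-crossing step, and every point within
   l1-distance one of such a step lies within distance 2 of Delta Lambda. *)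

Set Implicit Arguments.
Unset Strict Implicit.
Unset Printing Implicit Defensive.

Import Order.TTheory GRing.Theory Num.Theory.
Local Open Scope ring_scope.

Lemma big_uniq_supp (T : eqType) (V : nmodType) (s1 s2 : seq T) (F : T -> V) :
  uniq s1 -> uniq s2 -> {in [pred x | F x != 0], s1 =i s2} ->
  \sum_(x <- s1) F x = \sum_(x <- s2) F x.
Proof.
move=> u1 u2 e12; apply: perm_big_supp; apply: uniq_perm; rewrite ?filter_uniq //.
by move=> x; rewrite !mem_filter; case: (boolP (F x != 0)) => // /e12 ->.
Qed.

Lemma big_pick (T : eqType) (V : pzSemiRingType) (s : seq T) (a : T) (F : T -> V) :
  uniq s -> (a \notin s -> F a = 0) -> \sum_(x <- s) (x == a)%:R * F x = F a.
Proof.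
move=> us Fa; case: (boolP (a \in s)) => [as_|na].
  rewrite (@big_uniq_supp _ _ s [:: a]) ?big_seq1 ?eqxx ?mul1r // => x.
  by rewrite !inE; case: (eqVneq x a) => [->|_]; rewrite ?mul0r ?eqxx ?as_.
rewrite Fa // big1_seq // => x /= xs.
by rewrite (_ : x == a = false) ?mul0r //; apply: contraNF na => /eqP <-.
Qed.

Definition pdist (x y : point) : nat := maxn `|x.1 - y.1|%N `|x.2 - y.2|%N.

Lemma pdistC x y : pdist x y = pdist y x.
Proof. rewrite /pdist; lia. Qed.

Lemma pdist_triangle x y z : (pdist x z <= pdist x y + pdist y z)%N.
Proof. rewrite /pdist; lia. Qed.

Lemma pdist_leD x y z r r' :
  (pdist x y <= r)%N -> (pdist y z <= r')%N -> (pdist x z <= r + r')%N.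
Proof. by move=> xy yz; apply: leq_trans (pdist_triangle x y z) (leq_add xy yz). Qed.

Lemma mem_box c x r : (x \in box c r) = (pdist c x <= r)%N.
Proof.
rewrite /pdist; case: x => x1 x2; case: c => c1 c2 /=.
apply/allpairsP/idP => [[[i j]] [] hi hj [-> ->]|h].
  by move: hi hj; rewrite !mem_iota /= !add0n; lia.
exists (absz (x1 - c1 + r%:Z), absz (x2 - c2 + r%:Z)); rewrite !mem_iota /= !add0n.
split; [lia | lia | congr pair; lia].
Qed.

Lemma box_uniq c r : uniq (box c r).
Proof.
apply: allpairs_uniq; rewrite ?iota_uniq //.
by move=> [i j] [i' j'] _ _ /= [h1 h2]; congr pair; lia.
Qed.

Lemma mem_sites_of P (w : site) : (w \in sites_of P) = (w.1 \in P).
Proof.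
case: w => p s; apply/allpairsP/idP => [[[q t]] /= [qP _ [-> _]] //|pP].
by exists (p, s); split => //; case: (s).
Qed.

Lemma sites_of_uniq P : uniq P -> uniq (sites_of P).
Proof. by move=> uP; apply: allpairs_uniq => // [[i j] [i' j'] _ _ /= [-> ->]]. Qed.

Lemma mem_nbhd c r w : (w \in nbhd c r) = (pdist c w.1 <= r)%N.
Proof. by rewrite mem_sites_of mem_box. Qed.

Lemma nbhd_uniq c r : uniq (nbhd c r).
Proof. exact/sites_of_uniq/box_uniq. Qed.

Lemma nbhd0 c : nbhd c 0 = [:: (c, true); (c, false)].
Proof. by case: c => x y; rewrite /nbhd /sites_of /box /= !subrr !addr0. Qed.

Lemma big_spin {V : nmodType} (F : 'I_2 -> V) :
  \sum_(t <- [:: true; false]) F (sidx t) = \sum_(i < 2) F i.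
Proof.
rewrite !big_cons big_nil big_ord_recr big_ord_recr big_ord0 /= addr0 add0r.
by congr (F _ + F _); apply: val_inj.
Qed.

Lemma sidx_eq (s t : bool) : (sidx s == sidx t) = (s == t).
Proof. by case: s; case: t. Qed.

Lemma unitary_spin_rows (C : numClosedFieldType) (M : 'M[C]_2) s s' :
  M \is unitarymx ->
  \sum_(t <- [:: true; false]) M (sidx s) (sidx t) * (M (sidx s') (sidx t))^* = (s == s')%:R.
Proof.
move=> /unitarymxP /(congr1 (fun N : 'M_2 => N (sidx s) (sidx s'))).
rewrite !mxE sidx_eq => <-; rewrite (big_spin (fun i => M (sidx s) i * (M (sidx s') i)^*)).
by apply: eq_bigr => i _; rewrite !mxE.
Qed.

Lemma unitary_spin_cols (C : numClosedFieldType) (M : 'M[C]_2) s s' :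
  M \is unitarymx ->
  \sum_(t <- [:: true; false]) (M (sidx t) (sidx s))^* * M (sidx t) (sidx s') = (s == s')%:R.
Proof.
rewrite -trmxC_unitary => /unitary_spin_rows <-.
by apply: eq_bigr => t _; rewrite !mxE conjCK mulrC.
Qed.

Section Kernels.
Variable C : numClosedFieldType.
Implicit Types (A B K : kernel C) (r : nat) (u v w : site).

Lemma banded_nbhd r K u v : banded r K -> K u v != 0 -> v \in nbhd u.1 r.
Proof. by move=> bK; apply: contraR; rewrite mem_nbhd -ltnNge => /(bK u v) ->. Qed.

Lemma banded_nbhdV r K u v : banded r K -> K u v != 0 -> u \in nbhd v.1 r.
Proof. by move=> bK /(banded_nbhd bK); rewrite !mem_nbhd pdistC. Qed.

Definition unitary_range r K : Prop :=
  banded r K /\ forall u v : site,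
    \sum_(w <- nbhd u.1 r) (K w u)^* * K w v = (u == v)%:R /\
    \sum_(w <- nbhd u.1 r) K u w * (K v w)^* = (u == v)%:R.

Lemma unitary_range_kernel r K : unitary_range r K -> unitary_kernel K.
Proof. by exists r. Qed.

Lemma unitary_col_gram r K (s : seq site) u v :
  unitary_range r K -> uniq s -> (forall w, K w u != 0 -> w \in s) ->
  \sum_(w <- s) (K w u)^* * K w v = (u == v)%:R.
Proof.
move=> [bK uK] us supp; rewrite -(proj1 (uK u v)).
apply: big_uniq_supp; rewrite ?nbhd_uniq // => w; rewrite inE.
case: (eqVneq (K w u) 0) => [->|nz _]; first by rewrite conjC0 mul0r eqxx.
by rewrite supp // (banded_nbhdV bK nz).
Qed.

Lemma unitary_row_gram r K (s : seq site) u v :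
  unitary_range r K -> uniq s -> (forall w, K u w != 0 -> w \in s) ->
  \sum_(w <- s) K u w * (K v w)^* = (u == v)%:R.
Proof.
move=> [bK uK] us supp; rewrite -(proj2 (uK u v)).
apply: big_uniq_supp; rewrite ?nbhd_uniq // => w; rewrite inE.
case: (eqVneq (K u w) 0) => [->|nz _]; first by rewrite mul0r eqxx.
by rewrite supp // (banded_nbhd bK nz).
Qed.

Lemma kmul_nz r A B u v : kmul r A B u v != 0 ->
  exists2 w, A u w != 0 & B w v != 0.
Proof.
case: (boolP (has (fun w => (A u w != 0) && (B w v != 0)) (nbhd u.1 r))).
  by case/hasP => w _ /andP[]; exists w.
move/hasPn => none; rewrite /kmul big1_seq ?eqxx // => w /= /none.
by rewrite negb_and !negbK => /orP[] /eqP ->; rewrite ?mul0r ?mulr0.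
Qed.

Lemma kmul_ext r A A' B B' : A =2 A' -> B =2 B' -> kmul r A B =2 kmul r A' B'.
Proof. by move=> eA eB u v; apply: eq_bigr => w _; rewrite eA eB. Qed.

Section Product.
Variables (r r' : nat) (A B : kernel C).
Hypotheses (uA : unitary_range r A) (uB : unitary_range r' B).

Lemma kmul_banded : banded (r + r') (kmul r A B).
Proof.
move=> u v; rewrite ltnNge; apply: contraNeq => /kmul_nz [w Auw Bwv].
apply: (@pdist_leD _ w.1); rewrite -mem_nbhd.
  exact: banded_nbhd uA.1 Auw.
exact: banded_nbhd uB.1 Bwv.
Qed.

Lemma kmul_col_gram a b :
  \sum_(w <- nbhd a.1 (r + r')) ((kmul r A B) w a)^* * kmul r A B w b = (a == b)%:R.
Proof.
set N := nbhd a.1 (r + r'); set Y := nbhd a.1 (r + (r + r')).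
have kmulY w x : w \in N -> kmul r A B w x = \sum_(y <- Y) A w y * B y x.
  move=> wN; apply: big_uniq_supp; rewrite ?nbhd_uniq // => y; rewrite inE.
  case: (eqVneq (A w y) 0) => [->|nz _]; first by rewrite mul0r eqxx.
  move: wN (banded_nbhd uA.1 nz); rewrite !mem_nbhd => wN wy.
  by rewrite wy addnC (pdist_leD wN wy).
transitivity (\sum_(x <- Y) \sum_(y <- Y) (B x a)^* * B y b *
                \sum_(w <- N) (A w x)^* * A w y).
  rewrite (eq_big_seq (fun w => \sum_(x <- Y) \sum_(y <- Y)
              (B x a)^* * B y b * ((A w x)^* * A w y))); last first.
    move=> w wN; rewrite !kmulY // rmorph_sum mulr_suml; apply: eq_bigr => x _.
    by rewrite mulr_sumr; apply: eq_bigr => y _; rewrite rmorphM; ring.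
  rewrite exchange_big; apply: eq_bigr => x _; rewrite exchange_big.
  by apply: eq_bigr => y _; rewrite mulr_sumr.
transitivity (\sum_(x <- Y) \sum_(y <- Y) (y == x)%:R * ((B x a)^* * B y b)).
  apply: eq_bigr => x _; apply: eq_bigr => y _.
  case: (eqVneq (B x a) 0) => [->|nz]; first by rewrite conjC0 !mul0r mulr0.
  rewrite (unitary_col_gram _ uA (nbhd_uniq _ _)); first by rewrite mulrC eq_sym.
  move=> w /(banded_nbhdV uA.1); move: (banded_nbhdV uB.1 nz).
  by rewrite !mem_nbhd addnC; apply: pdist_leD.
rewrite (eq_big_seq (fun x => (B x a)^* * B x b)); last first.
  by move=> x xY; rewrite (big_pick (F := fun y => (B x a)^* * B y b)) ?nbhd_uniq // xY.
apply: (unitary_col_gram _ uB); rewrite ?nbhd_uniq // => x /(banded_nbhdV uB.1).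
by rewrite !mem_nbhd => ax; apply: leq_trans ax _; lia.
Qed.

Lemma kmul_row_gram a b :
  \sum_(w <- nbhd a.1 (r + r')) kmul r A B a w * (kmul r A B b w)^* = (a == b)%:R.
Proof.
set N := nbhd a.1 (r + r').
transitivity (\sum_(x <- nbhd a.1 r) \sum_(y <- nbhd b.1 r) A a x * (A b y)^* *
                \sum_(w <- N) B x w * (B y w)^*).
  rewrite /kmul (eq_bigr (fun w => \sum_(x <- nbhd a.1 r) \sum_(y <- nbhd b.1 r)
              A a x * (A b y)^* * (B x w * (B y w)^*))); last first.
    move=> w _; rewrite rmorph_sum mulr_suml; apply: eq_bigr => x _.
    by rewrite mulr_sumr; apply: eq_bigr => y _; rewrite rmorphM; ring.
  rewrite exchange_big; apply: eq_bigr => x _; rewrite exchange_big.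
  by apply: eq_bigr => y _; rewrite mulr_sumr.
rewrite (eq_big_seq (fun x => A a x * (A b x)^*)) ?(unitary_row_gram _ uA) ?nbhd_uniq //.
  by move=> w /(banded_nbhd uA.1).
move=> x xa.
rewrite -(big_pick (s := nbhd b.1 r) (F := fun y => A a x * (A b y)^*)) ?nbhd_uniq //.
  apply: eq_bigr => y _; rewrite (unitary_row_gram _ uB (nbhd_uniq _ _)).
    by rewrite mulrC eq_sym.
  move=> w /(banded_nbhd uB.1); move: xa; rewrite !mem_nbhd; apply: pdist_leD.
move=> xb; case: (eqVneq (A b x) 0) => [->|/(banded_nbhd uA.1)]; first by rewrite conjC0 mulr0.
by rewrite (negbTE xb).
Qed.

Lemma kmul_unitary : unitary_range (r + r') (kmul r A B).
Proof.
split=> [|u v]; first exact: kmul_banded.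
by split; [exact: kmul_col_gram | exact: kmul_row_gram].
Qed.

End Product.

(* Row [u] is supported at [g u]: this is the operator mapping |g u> to |u>. *)
Definition perm_kernel (g : site -> site) : kernel C := fun u w => (w == g u)%:R.

Lemma perm_kernel_unitary r (g f : site -> site) :
  cancel g f -> cancel f g -> (forall u, pdist u.1 (g u).1 <= r)%N ->
  unitary_range r (perm_kernel g).
Proof.
move=> gK fK gr; split=> [u v|a b].
  rewrite ltnNge; apply: contraNeq; rewrite /perm_kernel.
  by have [-> _|_] := eqVneq v (g u); [exact: gr | rewrite mulr0n eqxx].
have fr : f a \in nbhd a.1 r by rewrite mem_nbhd -{1}[a]fK pdistC.
rewrite /perm_kernel; split.
  under eq_bigr do rewrite conjC_nat !(eq_sym _ (g _)) !(can2_eq gK fK).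
  by rewrite (big_pick (F := fun w => (w == f b)%:R)) ?nbhd_uniq ?fr // (can_eq fK).
under eq_bigr do rewrite conjC_nat.
rewrite (big_pick (F := fun w => (w == g b)%:R)) ?nbhd_uniq ?(can_eq gK) //.
by rewrite mem_nbhd gr.
Qed.

Lemma coin_unitary (c : point -> 'M[C]_2) :
  (forall x, c x \is unitarymx) -> unitary_range 0 (coin c).
Proof.
move=> uc; split=> [u v|[x s] [y t]].
  rewrite ltnNge; apply: contraNeq; rewrite /coin.
  by have [-> _|_] := eqVneq u.1 v.1; rewrite ?mul0r ?eqxx // /pdist !subrr.
rewrite nbhd0 (_ : [:: _; _] = map (pair x) [:: true; false]) // !big_map /coin /=.
rewrite xpair_eqE eqxx; case: (eqVneq x y) => [<-|nxy] /=.
  split; [rewrite -(unitary_spin_cols s t (uc x)) | rewrite -(unitary_spin_rows s t (uc x))].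
    by apply: eq_bigr => j _; rewrite !mul1r.
  by apply: eq_bigr => j _; rewrite !mul1r.
by split; rewrite big1 // => j _; rewrite !mul0r ?conjC0 ?mulr0.
Qed.

Lemma kmul_perm_kernel r g K u v :
  (pdist u.1 (g u).1 <= r)%N -> kmul r (perm_kernel g) K u v = K (g u) v.
Proof.
move=> gu; rewrite /kmul (big_pick (F := fun w => K w v)) ?nbhd_uniq //.
by rewrite mem_nbhd gu.
Qed.

Lemma kmul_coin (c : point -> 'M[C]_2) K u v :
  kmul 0 (coin c) K u v =
  \sum_(s <- [:: true; false]) c u.1 (sidx u.2) (sidx s) * K (u.1, s) v.
Proof. by rewrite /kmul nbhd0 !big_cons !big_nil /coin /= eqxx !mul1r. Qed.

Lemma coin_nz (c : point -> 'M[C]_2) u v : coin c u v != 0 -> u.1 = v.1.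
Proof. by rewrite /coin; have [//|_] := eqVneq u.1 v.1; rewrite mul0r eqxx. Qed.

Definition keeps_side (P : pred point) (K : kernel C) : Prop :=
  forall u v, K u v != 0 -> P u.1 = P v.1.

Lemma kmul_keeps_side P r A B :
  keeps_side P A -> keeps_side P B -> keeps_side P (kmul r A B).
Proof. by move=> kA kB u v /kmul_nz [w /kA -> /kB]. Qed.

Lemma perm_kernel_keeps_side P (g : site -> site) :
  (forall u, P (g u).1 = P u.1) -> keeps_side P (perm_kernel g).
Proof.
move=> gP u v; rewrite /perm_kernel.
by have [-> _|_] := eqVneq v (g u); rewrite ?gP ?mulr0n ?eqxx.
Qed.

Lemma coin_keeps_side P (c : point -> 'M[C]_2) : keeps_side P (coin c).
Proof.
by move=> u v; rewrite /coin; have [-> _|_] := eqVneq u.1 v.1; rewrite ?mul0r ?eqxx.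
Qed.

Lemma compression_unitary_keeps_side L r K :
  unitary_range r K -> keeps_side [pred x | x \in LambdaL L] K -> compression_unitary L K.
Proof.
have us := sites_of_uniq (box_uniq (0, 0) L).
move=> uK kK u v uL _; split.
  by apply: (unitary_col_gram _ uK us) => w /kK; rewrite mem_sites_of /= => ->.
by apply: (unitary_row_gram _ uK us) => w /kK; rewrite mem_sites_of /= => <-.
Qed.

End Kernels.

Definition e1 : point := (1, 0).
Definition e2 : point := (0, 1).

(* The shift along [e] sends |y,s> to |y + s e, s>; [hop e u] is the site it sends to [u]. *)
Definition hop (e : point) (u : site) : site := (u.1 - e *~ spin u.2, u.2).

Definition bounce (P : pred point) (e : point) (u : site) : site :=
  if P (hop e u).1 == P u.1 then hop e u else (u.1, ~~ u.2).

Lemma spinN s : spin (~~ s) = - spin s. Proof. by case: s. Qed.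

Lemma bounceK P e : cancel (bounce P e) (bounce P (- e)).
Proof.
case=> x s; rewrite /bounce /hop /=.
have [side|cross] := eqVneq (P (x - e *~ spin s)) (P x) => /=.
  by rewrite mulNrz opprK subrK side eqxx.
by rewrite spinN mulrNz mulNrz opprK (negbTE cross) negbK.
Qed.

Lemma bounceKV P e : cancel (bounce P (- e)) (bounce P e).
Proof. by rewrite -{2}[e]opprK; apply: bounceK. Qed.

Lemma bounce_side P e u : P (bounce P e u).1 = P u.1.
Proof. by rewrite /bounce; case: eqP. Qed.

Lemma pdist_hop e u : pdist u.1 (hop e u).1 = pdist 0 e.
Proof. by case: u => x [] /=; rewrite /pdist ?mulr1z ?mulrN1z /=; lia. Qed.

Lemma pdist_bounce P e u : (pdist u.1 (bounce P e u).1 <= pdist 0%R e)%N.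
Proof. by rewrite /bounce; case: ifP; rewrite ?pdist_hop // /pdist !subrr. Qed.

Lemma bounce_same P e u : P (hop e u).1 = P u.1 -> bounce P e u = hop e u.
Proof. by rewrite /bounce => ->; rewrite eqxx. Qed.

Lemma bounce_cross P e u : P (hop e u).1 != P u.1 -> bounce P e u = (u.1, ~~ u.2).
Proof. by rewrite /bounce => /negbTE ->. Qed.

Definition l1dist (x y : point) : nat := `|x.1 - y.1|%N + `|x.2 - y.2|%N.

Lemma l1distC x y : l1dist x y = l1dist y x.
Proof. rewrite /l1dist; lia. Qed.

Lemma l1distxx x : l1dist x x = 0%N.
Proof. by rewrite /l1dist !subrr. Qed.

Lemma l1dist_triangle x y z : (l1dist x z <= l1dist x y + l1dist y z)%N.
Proof. rewrite /l1dist; lia. Qed.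

Lemma l1dist_hop e u : l1dist u.1 (hop e u).1 = l1dist 0%R e.
Proof. by case: u => x [] /=; rewrite /l1dist ?mulr1z ?mulrN1z /=; lia. Qed.

Lemma l1dist_bounce P e u : (l1dist u.1 (bounce P e u).1 <= l1dist 0%R e)%N.
Proof. by rewrite /bounce; case: ifP; rewrite ?l1dist_hop // l1distxx. Qed.

Definition near_boundary (P : pred point) (x : point) : Prop :=
  exists p q : point, [/\ P p != P q, l1dist p q = 1%N & (l1dist x p <= 1)%N].

Lemma near_boundary_edge P p q x : P p != P q -> l1dist p q = 1%N ->
  (l1dist x p <= 1)%N || (l1dist x q <= 1)%N -> near_boundary P x.
Proof.
move=> pq d1 /orP[xp|xq]; first by exists p, q.
by exists q, p; rewrite eq_sym l1distC.
Qed.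

Lemma mem_LambdaL L x : (x \in LambdaL L) = (pdist 0%R x <= L)%N.
Proof. exact: mem_box. Qed.

Lemma LambdaL_crossing L p q :
  (p \in LambdaL L) != (q \in LambdaL L) -> l1dist p q = 1%N ->
  in_DeltaLambda L p \/ in_DeltaLambda L q.
Proof.
wlog pL : p q / p \in LambdaL L.
  move=> sym ne pq; have [pL|pN] := boolP (p \in LambdaL L); first exact: sym.
  rewrite eq_sym in ne; rewrite l1distC in pq.
  have qL : q \in LambdaL L by move: ne; rewrite (negbTE pN); case: (q \in _).
  by case: (sym q p qL ne pq); [right | left].
move=> ne pq; have qN : q \notin LambdaL L by move: ne; rewrite pL; case: (q \in _).
move: pL qN pq {ne}; rewrite !mem_LambdaL; case: p => p1 p2; case: q => q1 q2.
rewrite /pdist /l1dist /in_DeltaLambda /= => pL qN pq.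
case: (boolP ((q1 < - L%:Z) || (q2 < - L%:Z))) => h; [right | left].
  by split; lia.
by split; lia.
Qed.

Lemma DeltaLambda2_l1dist L b x :
  in_DeltaLambda L b -> (l1dist x b <= 2)%N -> in_DeltaLambda2 L x.
Proof. by move=> bD xb; exists b; split => //; move: xb; rewrite /l1dist !expr2; nia. Qed.

Lemma near_boundary_LambdaL L x :
  near_boundary [pred y | y \in LambdaL L] x -> in_DeltaLambda2 L x.
Proof.
case=> p [q] [/= ne pq xp].
have [pD|qD] := LambdaL_crossing ne pq; apply: DeltaLambda2_l1dist; [exact: pD | | exact: qD |].
  exact: leq_trans xp _.
by apply: leq_trans (l1dist_triangle x p q) _; rewrite pq addn1.
Qed.

Section Walks.
Variables (C : numClosedFieldType) (c1 c2 : point -> 'M[C]_2).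

Definition walk_of (g1 g2 : site -> site) : kernel C :=
  kmul 1 (perm_kernel C g1) (kmul 0 (coin c1) (kmul 1 (perm_kernel C g2) (coin c2))).

Definition decoupled_walk (P : pred point) : kernel C :=
  walk_of (bounce P e1) (bounce P e2).

Lemma shift1E : shift1 C =2 perm_kernel C (hop e1).
Proof.
move=> [[x1 x2] s] [[y1 y2] t]; rewrite /shift1 /perm_kernel /hop /=; congr (_%:R).
by case: s; case: t; rewrite ?mulr1z ?mulrN1z !xpair_eqE /= ?andbF //; lia.
Qed.

Lemma shift2E : shift2 C =2 perm_kernel C (hop e2).
Proof.
move=> [[x1 x2] s] [[y1 y2] t]; rewrite /shift2 /perm_kernel /hop /=; congr (_%:R).
by case: s; case: t; rewrite ?mulr1z ?mulrN1z !xpair_eqE /= ?andbF //; lia.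
Qed.

Lemma walk_hop : walk c1 c2 =2 walk_of (hop e1) (hop e2).
Proof.
by apply: kmul_ext shift1E _; apply: kmul_ext => //; apply: kmul_ext shift2E _.
Qed.

Lemma decoupled_walk_unitary P :
  (forall x, c1 x \is unitarymx) -> (forall x, c2 x \is unitarymx) ->
  unitary_range 2 (decoupled_walk P).
Proof.
move=> uc1 uc2.
have short1 u : (pdist u.1 (bounce P e1 u).1 <= 1)%N := pdist_bounce P e1 u.
have short2 u : (pdist u.1 (bounce P e2 u).1 <= 1)%N := pdist_bounce P e2 u.
have uD1 := perm_kernel_unitary C (bounceK P e1) (bounceKV P e1) short1.
have uD2 := perm_kernel_unitary C (bounceK P e2) (bounceKV P e2) short2.
exact: kmul_unitary uD1 (kmul_unitary (coin_unitary uc1) (kmul_unitary uD2 (coin_unitary uc2))).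
Qed.

Lemma decoupled_walk_keeps_side P : keeps_side P (decoupled_walk P).
Proof.
apply/kmul_keeps_side; first exact/perm_kernel_keeps_side/bounce_side.
apply/kmul_keeps_side; first exact: coin_keeps_side.
apply/kmul_keeps_side; [exact/perm_kernel_keeps_side/bounce_side | exact: coin_keeps_side].
Qed.

Section Formula.
Variables (g1 g2 : site -> site).
Hypotheses (g1_short : forall u, (pdist u.1 (g1 u).1 <= 1)%N)
           (g2_short : forall u, (pdist u.1 (g2 u).1 <= 1)%N).

Lemma walk_ofE u v : walk_of g1 g2 u v =
  \sum_(s <- [:: true; false])
     c1 (g1 u).1 (sidx (g1 u).2) (sidx s) * coin c2 (g2 ((g1 u).1, s)) v.
Proof.
rewrite /walk_of kmul_perm_kernel // kmul_coin.
by apply: eq_bigr => s _; rewrite kmul_perm_kernel.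
Qed.

Lemma walk_of_supp u v : walk_of g1 g2 u v != 0 -> exists s, v.1 = (g2 ((g1 u).1, s)).1.
Proof.
rewrite walk_ofE !big_cons big_nil addr0.
have [t0|/coin_nz <-] := eqVneq (coin c2 (g2 ((g1 u).1, true)) v) 0; last by exists true.
have [f0|/coin_nz <-] := eqVneq (coin c2 (g2 ((g1 u).1, false)) v) 0; last by exists false.
by rewrite t0 f0 !mulr0 addr0 eqxx.
Qed.

End Formula.

Lemma walk_neq_decoupled P u v :
  walk_of (hop e1) (hop e2) u v != decoupled_walk P u v ->
  near_boundary P u.1 /\ near_boundary P v.1.
Proof.
have h1 w : (pdist w.1 (hop e1 w).1 <= 1)%N by rewrite pdist_hop.
have h2 w : (pdist w.1 (hop e2 w).1 <= 1)%N by rewrite pdist_hop.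
have d1 w : (pdist w.1 (bounce P e1 w).1 <= 1)%N := pdist_bounce P e1 w.
have d2 w : (pdist w.1 (bounce P e2 w).1 <= 1)%N := pdist_bounce P e2 w.
move=> neq; have [same|cross] := eqVneq (P (hop e1 u).1) (P u.1).
  move: neq; rewrite /decoupled_walk !walk_ofE // bounce_same //.
  set z := (hop e1 u).1 => neq.
  have [s ne] : exists s, coin c2 (hop e2 (z, s)) v != coin c2 (bounce P e2 (z, s)) v.
    have [et|] := eqVneq (coin c2 (hop e2 (z, true)) v) (coin c2 (bounce P e2 (z, true)) v);
      last by exists true.
    have [ef|] := eqVneq (coin c2 (hop e2 (z, false)) v) (coin c2 (bounce P e2 (z, false)) v);
      last by exists false.
    by move: neq; rewrite !big_cons !big_nil et ef eqxx.
  have cross2 : P z != P (hop e2 (z, s)).1 by apply: contraNneq ne => /esym/bounce_same ->.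
  have edge := near_boundary_edge cross2 (l1dist_hop e2 (z, s)).
  split; apply: edge; first by rewrite /= /z l1dist_hop.
  have [h0|/coin_nz <-] := eqVneq (coin c2 (hop e2 (z, s)) v) 0; last by rewrite l1distxx orbT.
  move: ne; rewrite h0 eq_sym => /coin_nz; rewrite bounce_cross 1?eq_sym //= => <-.
  by rewrite l1distxx.
have cross' : P u.1 != P (hop e1 u).1 by rewrite eq_sym.
have edge := near_boundary_edge cross' (l1dist_hop e1 u).
split; apply: edge; first by rewrite l1distxx.
have [W0|/(walk_of_supp h1 h2) [s ->]] := eqVneq (walk_of (hop e1) (hop e2) u v) 0; last first.
  by rewrite orbC l1distC (l1dist_hop e2 ((hop e1 u).1, s)).
move: neq; rewrite W0 eq_sym => /(walk_of_supp d1 d2) [s ->].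
by rewrite (bounce_cross cross) /= l1distC (l1dist_bounce P e2 (u.1, s)).
Qed.

End Walks.

Theorem mainTheorem5 (R : realType) (L : nat) (c1 c2 : point -> 'M[R[i]]_2)
  (hc1 : forall x, c1 x \is unitarymx) (hc2 : forall x, c2 x \is unitarymx) :
  exists Wd : kernel R[i],
    [/\ unitary_kernel Wd,
        compression_unitary L Wd &
        forall u v : site, walk c1 c2 u v <> Wd u v ->
          in_DeltaLambda2 L u.1 /\ in_DeltaLambda2 L v.1].
Proof.
set Lambda := [pred x | x \in LambdaL L].
have uWd := decoupled_walk_unitary Lambda hc1 hc2.
exists (decoupled_walk c1 c2 Lambda); split.
- exact: unitary_range_kernel uWd.
- apply: compression_unitary_keeps_side uWd _; exact: decoupled_walk_keeps_side.
- move=> u v /eqP; rewrite (walk_hop c1 c2 u v) => /walk_neq_decoupled [nu nv].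
  by split; apply: near_boundary_LambdaL.
Qed.
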